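(* Let $f:[0,1]\to\mathbb R$ be twice differentiable and suppose there exist constants $0<c_1<c_2$ with $c_1<|f''(x)|<c_2$ for all $x\in[0,1]$. Then $f$ satisfies the uniform nonlinearity (UN) condition.
   Context: For a positive integer $M$ and $k=0,\dots,M-1$ let $I_k=[k/M,(k+1)/M]$ and $m_k=\inf_{a,b\in\mathbb R}\max_{x\in I_k}|f(x)-ax-b|$. A function $f$ satisfies the UN condition if there exists $K>0$ such that for all sufficiently large $M$, $$M\max_{0\le k\le M-1}m_k^2\le K\sum_{k=0}^{M-1}m_k^2 .$$ *)

From Stdlib Require Import Reals.
From Coquelicot Require Import Coquelicot.
Open Scope R_scope.

Definition is_derive_01 (g : R -> R) (x l : R) : Prop :=
  filterlim (fun y => (g y - g x) / (y - x))
    (within (fun y => 0 <= y <= 1 /\ y <> x) (locally x)) (locally l).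

Definition in_Ik (M k : nat) (x : R) : Prop :=
  INR k / INR M <= x <= (INR k + 1) / INR M.

Definition dev (f : R -> R) (M k : nat) (a b : R) : Rbar :=
  Lub_Rbar (fun v => exists x, in_Ik M k x /\ v = Rabs (f x - a * x - b)).

Definition mk (f : R -> R) (M k : nat) : R :=
  real (Glb_Rbar (fun m => exists a b, dev f M k a b = Finite m)).

(* UN condition: exists K > 0 s.t. for all sufficiently large M,
   M * max_{0<=k<=M-1} m_k^2 <= K * sum_{k=0}^{M-1} m_k^2
   (the max is written out: the bound holds for every k <= M-1). *)
Definition UN (f : R -> R) : Prop :=
  exists K : R, 0 < K /\
  exists N : nat, forall M : nat, (N <= M)%nat -> (0 < M)%nat ->
    forall k : nat, (k <= M - 1)%nat ->
      INR M * (mk f M k) ^ 2 <= K * sum_n (fun j => (mk f M j) ^ 2) (M - 1).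

From Stdlib Require Import Reals Lra Lia.
From Coquelicot Require Import Coquelicot.
Open Scope R_scope.

(* On a cell of length h = 1/M the tangent line at the midpoint approximates f
   within c2 h^2 / 4 (Taylor).  Conversely, every line is at least c1 h^2 / 64
   away from f on the cell: the second difference of f with step h/4 is
   (h/4)^2 f''(z) for some z, while that of a line vanishes.  Hence all m_k are
   comparable to h^2 with ratio at most 16 c2 / c1, and UN holds with
   K = (16 c2 / c1)^2. *)

Lemma is_derive_01_eps g x l : is_derive_01 g x l -> forall eps, 0 < eps ->
  exists d, 0 < d /\ forall y, 0 <= y <= 1 -> y <> x -> Rabs (y - x) < d ->
    Rabs ((g y - g x) / (y - x) - l) < eps.
Proof.
  intros Dg eps Heps.
  assert (Hl : locally l (fun z => Rabs (z - l) < eps)).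
  { exists (mkposreal eps Heps). now intros z Hz. }
  destruct (Dg _ Hl) as [d Hd].
  exists d; split; [apply cond_pos |].
  intros y Hy Hyx Hyd. apply (Hd y); [exact Hyd | split; assumption].
Qed.

Lemma is_derive_01_lipschitz_at g x l : is_derive_01 g x l ->
  exists d, 0 < d /\ forall y, 0 <= y <= 1 -> Rabs (y - x) < d ->
    Rabs (g y - g x) <= (Rabs l + 1) * Rabs (y - x).
Proof.
  intros Dg. destruct (is_derive_01_eps g x l Dg 1 Rlt_0_1) as [d [Hd Hq]].
  exists d; split; [exact Hd |]. intros y Hy Hyd.
  pose proof (Rabs_pos l). pose proof (Rabs_pos (y - x)).
  destruct (Req_dec y x) as [-> | Hyx].
  { rewrite Rminus_diag, Rabs_R0. nra. }
  specialize (Hq y Hy Hyx Hyd).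
  replace (g y - g x) with (((g y - g x) / (y - x) - l) * (y - x) + l * (y - x))
    by (field; lra).
  eapply Rle_trans; [apply Rabs_triang |]. rewrite !Rabs_mult. nra.
Qed.

(* Continuity and the mean value theorem are two-sided notions; composing
   with the retraction [clamp01] of R onto [0,1] extends [g] outside [0,1]. *)
Definition clamp01 (y : R) : R := Rmax 0 (Rmin 1 y).

Lemma clamp01_id y : 0 <= y <= 1 -> clamp01 y = y.
Proof. intros. unfold clamp01, Rmax, Rmin. repeat destruct Rle_dec; lra. Qed.

Lemma clamp01_range y : 0 <= clamp01 y <= 1.
Proof. unfold clamp01, Rmax, Rmin. repeat destruct Rle_dec; lra. Qed.

Lemma clamp01_dist x y : 0 <= x <= 1 -> Rabs (clamp01 y - x) <= Rabs (y - x).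
Proof.
  intros. unfold clamp01, Rmax, Rmin.
  repeat destruct Rle_dec; unfold Rabs; repeat destruct Rcase_abs; lra.
Qed.

Lemma is_derive_01_continuity_clamp g x l : 0 <= x <= 1 -> is_derive_01 g x l ->
  continuity_pt (fun y => g (clamp01 y)) x.
Proof.
  intros Hx Dg. destruct (is_derive_01_lipschitz_at g x l Dg) as [d [Hd Hlip]].
  pose (L := Rabs l + 1).
  assert (HL : 0 < L) by (pose proof (Rabs_pos l); unfold L; lra).
  intros eps Heps. exists (Rmin d (eps / L)). split.
  { apply Rmin_pos; [exact Hd | apply Rdiv_lt_0_compat; assumption]. }
  intros y [_ Hy]. simpl in *. unfold R_dist in *. rewrite (clamp01_id x Hx).
  pose proof (clamp01_dist x y Hx). pose proof (Rmin_l d (eps / L)).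
  pose proof (Rmin_r d (eps / L)).
  eapply Rle_lt_trans; [apply Hlip; [apply clamp01_range | lra] |].
  fold L. replace eps with (L * (eps / L)) by (field; lra).
  apply Rmult_lt_compat_l; lra.
Qed.

Lemma is_derive_01_interior g G x l : 0 < x < 1 -> is_derive_01 g x l ->
  (forall y, 0 <= y <= 1 -> G y = g y) -> is_derive G x l.
Proof.
  intros Hx Dg HG. apply is_derive_Reals. intros eps Heps.
  destruct (is_derive_01_eps g x l Dg eps Heps) as [d [Hd Hq]].
  assert (Hr : 0 < Rmin d (Rmin x (1 - x))) by (repeat apply Rmin_pos; lra).
  exists (mkposreal _ Hr). simpl. intros h Hh Hhr.
  pose proof (Rmin_l d (Rmin x (1 - x))). pose proof (Rmin_r d (Rmin x (1 - x))).
  pose proof (Rmin_l x (1 - x)). pose proof (Rmin_r x (1 - x)).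
  assert (Habs : - Rabs h <= h <= Rabs h) by (unfold Rabs; destruct Rcase_abs; lra).
  rewrite !HG by lra.
  replace h with ((x + h) - x) at 2 by ring.
  apply Hq; [lra | lra | replace (x + h - x) with h by ring; lra].
Qed.

Lemma mean_value_01 g g' a b : 0 <= a <= 1 -> 0 <= b <= 1 ->
  (forall x, 0 <= x <= 1 -> is_derive_01 g x (g' x)) ->
  exists c, (a <= c <= b \/ b <= c <= a) /\ g b - g a = g' c * (b - a).
Proof.
  intros Ha Hb Dg.
  assert (Hab : forall x, Rmin a b <= x <= Rmax a b -> 0 <= x <= 1)
    by (intros x; unfold Rmin, Rmax; destruct Rle_dec; lra).
  destruct (MVT_gen (fun y => g (clamp01 y)) a b g') as [c [Hc E]].
  - intros x Hx. apply (is_derive_01_interior g); [ | apply Dg | ].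
    + unfold Rmin, Rmax in Hx; destruct Rle_dec; lra.
    + apply Hab; lra.
    + intros y Hy; now rewrite clamp01_id.
  - intros x Hx. apply (is_derive_01_continuity_clamp g x (g' x)); apply Hab in Hx;
      [exact Hx | apply Dg, Hx].
  - exists c. rewrite !clamp01_id in E by assumption. split; [| exact E].
    unfold Rmin, Rmax in Hc; destruct Rle_dec; lra.
Qed.

Lemma in_Ik_iff M k x :
  in_Ik M k x <-> INR k / INR M <= x <= INR k / INR M + / INR M.
Proof.
  unfold in_Ik. replace ((INR k + 1) / INR M) with (INR k / INR M + / INR M)
    by (unfold Rdiv; ring).
  reflexivity.
Qed.

(* No hypothesis on [M]: for [M = 0], Rocq's [/ 0 = 0] makes every cell {0}. *)
Lemma in_Ik_left M k : in_Ik M k (INR k / INR M).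
Proof.
  apply in_Ik_iff. split; [lra |].
  assert (0 <= / INR M).
  { destruct (pos_INR M) as [HM | HM].
    - left. now apply Rinv_0_lt_compat.
    - rewrite <- HM, Rinv_0. lra. }
  lra.
Qed.

Lemma cell_in_01 M k : (0 < M)%nat -> (k <= M - 1)%nat ->
  0 <= INR k / INR M /\ 0 < / INR M /\ INR k / INR M + / INR M <= 1.
Proof.
  intros HM Hk.
  assert (HMpos : 0 < INR M) by (apply lt_0_INR; lia).
  assert (Hk1 : INR k + 1 <= INR M) by (rewrite <- S_INR; apply le_INR; lia).
  pose proof (pos_INR k).
  split; [| split].
  - apply Rdiv_le_0_compat; lra.
  - now apply Rinv_0_lt_compat.
  - replace (INR k / INR M + / INR M) with ((INR k + 1) / INR M) by (field; lra).
    unfold Rdiv. rewrite <- (Rinv_r (INR M)) at 2 by lra.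
    apply Rmult_le_compat_r; [left; now apply Rinv_0_lt_compat | exact Hk1].
Qed.

Lemma dev_ge_pointwise f M k A B m x : dev f M k A B = Finite m -> in_Ik M k x ->
  Rabs (f x - A * x - B) <= m.
Proof.
  intros E Hx. unfold dev in E.
  destruct (Lub_Rbar_correct (fun v => exists x, in_Ik M k x /\ v = Rabs (f x - A * x - B)))
    as [Hub _].
  rewrite E in Hub. exact (Hub _ (ex_intro _ x (conj Hx eq_refl))).
Qed.

Lemma dev_le_uniform f M k A B U :
  (forall x, in_Ik M k x -> Rabs (f x - A * x - B) <= U) ->
  exists m, dev f M k A B = Finite m /\ m <= U.
Proof.
  intros HU. unfold dev.
  set (E := fun v => exists x, in_Ik M k x /\ v = Rabs (f x - A * x - B)).
  destruct (Lub_Rbar_correct E) as [Hub Hleast].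
  assert (Hle : Rbar_le (Lub_Rbar E) U)
    by (apply Hleast; intros v [x [Hx ->]]; now apply HU).
  assert (Hge := Hub _ (ex_intro _ _ (conj (in_Ik_left M k) eq_refl))).
  destruct (Lub_Rbar E) as [r | |]; simpl in *; try contradiction.
  now exists r.
Qed.

Lemma dev_nonneg f M k A B m : dev f M k A B = Finite m -> 0 <= m.
Proof.
  intros Hm. eapply Rle_trans; [apply Rabs_pos |].
  exact (dev_ge_pointwise f M k A B m _ Hm (in_Ik_left M k)).
Qed.

Lemma Glb_dev_nonneg f M k :
  Rbar_le 0 (Glb_Rbar (fun m => exists a b, dev f M k a b = Finite m)).
Proof.
  apply Glb_Rbar_correct. intros m [a [b Hm]]. exact (dev_nonneg f M k a b m Hm).
Qed.

Lemma mk_nonneg f M k : 0 <= mk f M k.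
Proof.
  pose proof (Glb_dev_nonneg f M k) as H0. unfold mk.
  destruct Glb_Rbar; simpl in *; lra.
Qed.

Lemma mk_le_uniform f M k A B U :
  (forall x, in_Ik M k x -> Rabs (f x - A * x - B) <= U) -> mk f M k <= U.
Proof.
  intros HU. destruct (dev_le_uniform f M k A B U HU) as [m [Hm HmU]].
  pose proof (Glb_dev_nonneg f M k) as H0.
  destruct (Glb_Rbar_correct (fun m => exists a b, dev f M k a b = Finite m)) as [Hlb _].
  assert (Hle := Hlb m (ex_intro _ _ (ex_intro _ _ Hm))).
  unfold mk. destruct Glb_Rbar; simpl in *; try contradiction. lra.
Qed.

Lemma mk_ge f M k L : (exists A B m, dev f M k A B = Finite m) ->
  (forall A B m, dev f M k A B = Finite m -> L <= m) -> L <= mk f M k.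
Proof.
  intros [A [B [m Hm]]] HL. unfold mk.
  set (E := fun m => exists a b, dev f M k a b = Finite m).
  destruct (Glb_Rbar_correct E) as [Hlb Hgreatest].
  assert (Hge : Rbar_le L (Glb_Rbar E))
    by (apply Hgreatest; intros v [a [b Hv]]; exact (HL a b v Hv)).
  assert (Hle := Hlb m (ex_intro _ _ (ex_intro _ _ Hm))).
  destruct (Glb_Rbar E) as [r | |]; simpl in *; try contradiction.
  exact Hge.
Qed.

Lemma UN_of_comparable_mk f C : 0 < C ->
  (forall M j k, (0 < M)%nat -> (j <= M - 1)%nat -> (k <= M - 1)%nat ->
     mk f M k <= C * mk f M j) ->
  UN f.
Proof.
  intros HC Hcmp. exists (C ^ 2). split; [now apply pow_lt |].
  exists 0%nat. intros M _ HM k Hk.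
  replace (INR M * mk f M k ^ 2) with (sum_n (fun _ => mk f M k ^ 2) (M - 1))
    by (rewrite sum_n_const; f_equal; f_equal; lia).
  rewrite <- (sum_n_mult_l (C ^ 2)), !sum_n_Reals.
  apply sum_Rle. intros j Hj.
  replace (mult (C ^ 2) (mk f M j ^ 2)) with ((C * mk f M j) ^ 2)
    by (unfold mult; simpl; ring).
  apply pow_incr. split; [apply mk_nonneg | now apply Hcmp].
Qed.

Section TwiceDifferentiable.

Variables f f' f'' : R -> R.
Hypothesis Df : forall x, 0 <= x <= 1 -> is_derive_01 f x (f' x).
Hypothesis Df' : forall x, 0 <= x <= 1 -> is_derive_01 f' x (f'' x).

Lemma taylor1_remainder_le c x m : (forall y, 0 <= y <= 1 -> Rabs (f'' y) <= c) ->
  0 <= x <= 1 -> 0 <= m <= 1 ->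
  Rabs (f x - f m - f' m * (x - m)) <= c * (x - m) ^ 2.
Proof.
  intros Hc Hx Hm.
  destruct (mean_value_01 f f' m x Hm Hx Df) as [y [Hy Ey]].
  destruct (mean_value_01 f' f'' m y Hm ltac:(lra) Df') as [z [Hz Ez]].
  replace (f x - f m - f' m * (x - m)) with (f'' z * (y - m) * (x - m))
    by (rewrite <- Ez; lra).
  assert (Hym : Rabs (y - m) <= Rabs (x - m))
    by (unfold Rabs; repeat destruct Rcase_abs; lra).
  specialize (Hc z ltac:(lra)).
  rewrite !Rabs_mult, <- (pow2_abs (x - m)).
  pose proof (Rabs_pos (f'' z)). pose proof (Rabs_pos (y - m)).
  pose proof (Rabs_pos (x - m)).
  assert (Rabs (f'' z) * Rabs (y - m) <= c * Rabs (x - m)) by nra.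
  nra.
Qed.

Lemma symmetric_sum_derive m t : 0 < m - t < 1 -> 0 < m + t < 1 ->
  is_derive (fun u => f (m + u) + f (m - u)) t (f' (m + t) - f' (m - t)).
Proof.
  intros Hminus Hplus.
  assert (Dint : forall x, 0 < x < 1 -> is_derive f x (f' x))
    by (intros x Hx; apply (is_derive_01_interior f); [lra | apply Df; lra | easy]).
  replace (f' (m + t) - f' (m - t))
    with (plus (scal 1 (f' (m + t))) (scal (-1) (f' (m - t))))
    by (unfold plus, scal; simpl; unfold mult; simpl; ring).
  apply (is_derive_plus (fun u => f (m + u)) (fun u => f (m - u)));
    apply (is_derive_comp f); [apply Dint; lra | | apply Dint; lra |];
    auto_derive; auto; ring.
Qed.

(* Rolle for [u |-> s^2 (f (m+u) + f (m-u)) - D u^2], which takes the same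
   value at [0] and [s], then the mean value theorem for [f'] on [m-c, m+c]. *)
Lemma second_difference_eq m s : 0 < s -> 0 < m - s -> m + s < 1 ->
  exists z, 0 <= z <= 1 /\ f (m + s) + f (m - s) - 2 * f m = s ^ 2 * f'' z.
Proof.
  intros Hs Hms Hps.
  set (D := f (m + s) + f (m - s) - 2 * f m).
  destruct (MVT_cor2 (fun u => s ^ 2 * (f (m + u) + f (m - u)) - D * u ^ 2)
     (fun u => s ^ 2 * (f' (m + u) - f' (m - u)) - D * (2 * u)) 0 s Hs)
    as [c [Ec Hc]].
  { intros u Hu. apply is_derive_Reals.
    apply (is_derive_minus (fun u => s ^ 2 * (f (m + u) + f (m - u)))
             (fun u => D * u ^ 2)).
    - apply is_derive_scal, symmetric_sum_derive; lra.
    - auto_derive; auto; ring. }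
  assert (Hrolle : (f' (m + c) - f' (m - c)) * s ^ 2 = D * (2 * c)).
  { rewrite Rplus_0_r, Rminus_0_r in Ec. unfold D in Ec |- *.
    apply Rmult_eq_reg_r with s; [nra | lra]. }
  destruct (MVT_cor2 f' f'' (m - c) (m + c)) as [z [Ez Hz]]; [lra | |].
  { intros x Hx. apply is_derive_Reals, (is_derive_01_interior f');
      [lra | apply Df'; lra | easy]. }
  exists z. split; [lra |]. fold D. rewrite Ez in Hrolle.
  apply Rmult_eq_reg_r with (2 * c); [nra | lra].
Qed.

Variables c1 c2 : R.
Hypothesis f''_ge : forall x, 0 <= x <= 1 -> c1 <= Rabs (f'' x).
Hypothesis f''_le : forall x, 0 <= x <= 1 -> Rabs (f'' x) <= c2.

Lemma cell_linear_approx M k : (0 < M)%nat -> (k <= M - 1)%nat ->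
  exists A B, forall x, in_Ik M k x ->
    Rabs (f x - A * x - B) <= c2 / 4 * (/ INR M) ^ 2.
Proof.
  intros HM Hk. destruct (cell_in_01 M k HM Hk) as [Ha [Hh Hah]].
  set (a := INR k / INR M) in *. set (h := / INR M) in *.
  set (p := a + h / 2).
  exists (f' p), (f p - f' p * p). intros x Hx. apply in_Ik_iff in Hx. fold a h in Hx.
  assert (Hc2 : 0 <= c2) by (eapply Rle_trans; [apply Rabs_pos | apply (f''_le 0); lra]).
  replace (f x - f' p * x - (f p - f' p * p)) with (f x - f p - f' p * (x - p)) by ring.
  eapply Rle_trans; [apply taylor1_remainder_le; [exact f''_le | lra | unfold p; lra] |].
  replace (c2 / 4 * h ^ 2) with (c2 * (h / 2) ^ 2) by field.
  apply Rmult_le_compat_l; [exact Hc2 |].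
  apply pow_maj_Rabs. unfold Rabs, p; destruct Rcase_abs; lra.
Qed.

Lemma mk_upper M k : (0 < M)%nat -> (k <= M - 1)%nat ->
  mk f M k <= c2 / 4 * (/ INR M) ^ 2.
Proof.
  intros HM Hk. destruct (cell_linear_approx M k HM Hk) as [A [B HAB]].
  exact (mk_le_uniform f M k A B _ HAB).
Qed.

(* Any line is within [m] of [f] at [p], [p + h/4], [p - h/4], so the second
   difference with step [h/4], which equals [(h/4)^2 f''(z)], is at most [4 m]. *)
Lemma dev_ge_curvature M k A B m : (0 < M)%nat -> (k <= M - 1)%nat ->
  dev f M k A B = Finite m -> c1 / 64 * (/ INR M) ^ 2 <= m.
Proof.
  intros HM Hk Hm. destruct (cell_in_01 M k HM Hk) as [Ha [Hh Hah]].
  set (a := INR k / INR M) in *. set (h := / INR M) in *.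
  set (p := a + h / 2). set (s := h / 4).
  assert (Hcell : forall x, a <= x <= a + h -> Rabs (f x - A * x - B) <= m)
    by (intros x Hx; apply (dev_ge_pointwise f M k A B m x Hm), in_Ik_iff; exact Hx).
  destruct (second_difference_eq p s) as [z [Hz Ez]]; unfold p, s; try lra.
  assert (Hsum : Rabs (f (p + s) + f (p - s) - 2 * f p) <= 4 * m).
  { set (e_plus := f (p + s) - A * (p + s) - B).
    set (e_minus := f (p - s) - A * (p - s) - B).
    set (e_mid := f p - A * p - B).
    assert (Hplus : Rabs e_plus <= m) by (apply Hcell; unfold p, s; lra).
    assert (Hminus : Rabs e_minus <= m) by (apply Hcell; unfold p, s; lra).
    assert (Hmid : Rabs e_mid <= m) by (apply Hcell; unfold p; lra).
    replace (f (p + s) + f (p - s) - 2 * f p) with (e_plus + e_minus - 2 * e_mid)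
      by (unfold e_plus, e_minus, e_mid; ring).
    eapply Rle_trans; [apply Rabs_triang |].
    rewrite Rabs_Ropp, Rabs_mult, (Rabs_pos_eq 2) by lra.
    pose proof (Rabs_triang e_plus e_minus). lra. }
  rewrite Ez, Rabs_mult, Rabs_pos_eq in Hsum by (apply pow_le; unfold s; lra).
  pose proof (f''_ge z Hz). unfold s in Hsum. nra.
Qed.

Lemma mk_lower M k : (0 < M)%nat -> (k <= M - 1)%nat ->
  c1 / 64 * (/ INR M) ^ 2 <= mk f M k.
Proof.
  intros HM Hk. apply mk_ge.
  - destruct (cell_linear_approx M k HM Hk) as [A [B HAB]].
    destruct (dev_le_uniform f M k A B _ HAB) as [m [Hm _]].
    now exists A, B, m.
  - intros A B m. exact (dev_ge_curvature M k A B m HM Hk).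
Qed.

End TwiceDifferentiable.

Theorem lemma3p3 (f f' f'' : R -> R) (c1 c2 : R) :
  (forall x, 0 <= x <= 1 -> is_derive_01 f x (f' x)) ->
  (forall x, 0 <= x <= 1 -> is_derive_01 f' x (f'' x)) ->
  0 < c1 -> c1 < c2 ->
  (forall x, 0 <= x <= 1 -> c1 < Rabs (f'' x) < c2) ->
  UN f.
Proof.
  intros Df Df' Hc1 Hc12 Hf''.
  assert (f''_ge : forall x, 0 <= x <= 1 -> c1 <= Rabs (f'' x))
    by (intros x Hx; specialize (Hf'' x Hx); lra).
  assert (f''_le : forall x, 0 <= x <= 1 -> Rabs (f'' x) <= c2)
    by (intros x Hx; specialize (Hf'' x Hx); lra).
  apply (UN_of_comparable_mk f (16 * c2 / c1)); [apply Rdiv_lt_0_compat; lra |].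
  intros M j k HM Hj Hk.
  pose proof (mk_upper f f' f'' Df Df' c2 f''_le M k HM Hk) as Hup.
  pose proof (mk_lower f f' f'' Df Df' c1 c2 f''_ge f''_le M j HM Hj) as Hlow.
  set (h2 := (/ INR M) ^ 2) in *.
  apply (Rle_trans _ _ _ Hup).
  replace (c2 / 4 * h2) with (16 * c2 / c1 * (c1 / 64 * h2)) by (field; lra).
  apply Rmult_le_compat_l; [apply Rlt_le, Rdiv_lt_0_compat; lra | exact Hlow].
Qed.
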